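(* Let $L\ge1$ and $n\ge2$ be integers, let $0<f_s<f_c<f_p$ with $f_c=\frac{f_p-f_s}{n-1}$, let $M_1=-\lfloor L/2\rfloor$, $M_2=\lfloor (L-1)/2\rfloor$, and for $\xi\in\{1,\dots,nL\}$ let $\mathcal{F}(\xi)=\big(\lceil \xi/n\rceil-\lfloor L/2\rfloor-1\big)f_p+\big((\xi-1)\bmod n\big)f_c$ and $I_\xi=[\mathcal{F}(\xi),\mathcal{F}(\xi)+f_s]$. Let $N_{\mathrm{sig}}\ge1$ and let $f_1^{\min}<f_1^{\max}<f_2^{\min}<\dots<f_{N_{\mathrm{sig}}}^{\min}<f_{N_{\mathrm{sig}}}^{\max}$ be reals in $[M_1f_p,(M_2+1)f_p]$, with $B_j=f_j^{\max}-f_j^{\min}$, $\mathcal{B}=\sum_{j}B_j$ and $\mathcal{T}=\bigcup_j[f_j^{\min},f_j^{\max})$. Let $\Sigma=\{\xi\in\{1,\dots,nL\}: I_\xi\cap\mathcal{T} \text{ has positive length}\}$. If $$2\sum_{j=1}^{N_{\mathrm{sig}}}\Big(n\big\lfloor \tfrac{B_j}{f_p}\big\rfloor+\Big\lceil \tfrac{\operatorname{mod}(B_j,f_p)}{f_c}\Big\rceil+1\Big)f_s+2N_{\mathrm{sig}}f_c\le\mathcal{B},$$ then $$2|\Sigma|\,f_s+2N_{\mathrm{sig}}f_c\le\mathcal{B}.$$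
   Context: $\operatorname{mod}(B,f_p)=B-f_p\lfloor B/f_p\rfloor$. Row $\xi$ of the signal matrix represents the spectrum on $I_\xi$, so $\Sigma$ plays the role of the row support $\operatorname{supp}(\mathbf{X})$ of the signal matrix. The quantity $2|\Sigma|f_s+\mathcal{B}+2N_{\mathrm{sig}}f_c$ is an upper bound on the overall sampling rate of the scheme, and the conclusion states it is at most $2\mathcal{B}$. *)

From HB Require Import structures.
From mathcomp Require Import all_boot all_order all_algebra.
From mathcomp Require Import all_classical all_reals all_analysis.
Set Implicit Arguments. Unset Strict Implicit. Unset Printing Implicit Defensive.
Import Order.TTheory GRing.Theory Num.Theory.
Local Open Scope ring_scope.
Local Open Scope classical_set_scope.

Definition rmod {R : realType} (B p : R) : R := B - p * (Num.floor (B / p))%:~R.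

Definition Ffreq {R : realType} (n L : nat) (fp fc : R) (xi : nat) : R :=
  (Num.ceil (xi%:R / n%:R : R) - (L %/ 2)%:Z - 1)%:~R * fp + ((xi.-1) %% n)%:R * fc.

Definition Ichan {R : realType} (n L : nat) (fp fc fs : R) (xi : nat) : set R :=
  `[Ffreq n L fp fc xi, Ffreq n L fp fc xi + fs]%classic.

(* T = union_j [f_j^min, f_j^max), signals indexed j = 0 .. Nsig-1 *)
Definition Tsupp {R : realType} (Nsig : nat) (fmin fmax : nat -> R) : set R :=
  \bigcup_(j in [set j : nat | (j < Nsig)%N]) `[fmin j, fmax j[%classic.

(* Sigma = { xi in 1..nL : I_xi /\ T has positive (Lebesgue) length };
   represented as a set of ordinals i : 'I_(n*L) with xi = i + 1 *)
Definition Sigma {R : realType} (n L : nat) (fp fc fs : R) (Nsig : nat)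
  (fmin fmax : nat -> R) : {set 'I_(n * L)} :=
  [set i : 'I_(n * L) | `[< (0 < (@lebesgue_measure R)
       (Ichan n L fp fc fs i.+1 `&` Tsupp Nsig fmin fmax))%E >] ].

From HB Require Import structures.
From mathcomp Require Import all_boot all_order all_algebra.
From mathcomp Require Import all_classical all_reals all_analysis.
From mathcomp Require Import zify ring lra.
Import Order.TTheory GRing.Theory Num.Theory.
Local Open Scope ring_scope.

(* Number the channels from 0.  Channel [i] starts at [(i %/ n) fp + (i %% n) fc] (up to a
   common offset); since [fp = (n - 1) fc + fs], consecutive starts are [fc] apart except
   across a block boundary, where they are [fs] apart.  Hence channels [Q n + k + 1] apart
   (with [k < n]) start at least [Q fp + k fc + fs] apart, so the channels meeting one band
   of width [B] have indices within [n floor(B / fp) + ceil(mod(B, fp) / fc)] of each other.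
   A channel in [Sigma] meets some band, and summing the bounds over the bands gives the
   claim from the hypothesis. *)

Lemma card_le_diameter (N k : nat) (S : {set 'I_N}) :
  {in S &, forall i j : 'I_N, (i <= j)%N -> (j - i <= k)%N} -> (#|S| <= k.+1)%N.
Proof.
move=> diamS; have [->|[i0 Si0]] := set_0Vmem S; first by rewrite cards0.
have [lo Slo lo_min] := arg_minnP (fun i : 'I_N => nat_of_ord i) Si0.
rewrite cardE -(size_map (@nat_of_ord N)) -(size_iota lo k.+1).
apply: uniq_leq_size; first by rewrite (map_inj_uniq (@ord_inj N)) enum_uniq.
move=> _ /mapP[i + ->]; rewrite mem_enum mem_iota => Si.
by have := diamS _ _ Slo Si (lo_min _ Si); have := lo_min _ Si; lia.
Qed.

Section ChannelPositions.
Variables (R : realType) (n : nat) (fp fc fs : R).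

Definition chan_pos (i : nat) : R := (i %/ n)%:R * fp + (i %% n)%:R * fc.

Lemma Ffreq_chan_pos (L i : nat) : (0 < n)%N ->
  Ffreq n L fp fc i.+1 = chan_pos i - (L %/ 2)%:R * fp.
Proof.
move=> n_gt0; rewrite /Ffreq /chan_pos.
have -> : Num.ceil (i.+1%:R / n%:R : R) = (i %/ n)%:Z + 1.
  apply: ceil_def; rewrite addrK intrD -!pmulrn.
  rewrite ltr_pdivlMr ?ltr0n // ler_pdivrMr ?ltr0n //.
  rewrite natr1 -!natrM ltr_nat ler_nat; have := ltn_pmod i n_gt0; have := divn_eq i n.
  by move: (i %/ n)%N (i %% n)%N => q r ->; rewrite mulSn; lia.
have -> : (i %/ n)%:Z + 1 - (L %/ 2)%:Z - 1 = (i %/ n)%:Z - (L %/ 2)%:Z by ring.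
by rewrite intrB succnK /=; ring.
Qed.

Hypotheses (n_gt0 : (0 < n)%N) (fs_ge0 : 0 <= fs) (fs_le_fc : fs <= fc)
  (fp_def : fp = (n%:R - 1) * fc + fs).

Lemma chan_posE (i : nat) : chan_pos i = i%:R * fc - (i %/ n)%:R * (fc - fs).
Proof. by rewrite /chan_pos fp_def {3}(divn_eq i n) natrD natrM; ring. Qed.

Lemma chan_pos_gap (i d Q k : nat) : (k < n)%N -> (Q * n + k < d)%N ->
  Q%:R * fp + k%:R * fc + fs <= chan_pos (i + d) - chan_pos i.
Proof.
move=> k_lt_n far; have [e ->] : exists e, d = ((Q * n + k).+1 + e)%N.
  by exists (d - (Q * n + k).+1)%N; rewrite subnKC.
have blocks : ((i + ((Q * n + k).+1 + e)) %/ n <= i %/ n + (Q + 1 + e))%N.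
  rewrite -ltnS ltn_divLR // {1}(divn_eq i n).
  by have := ltn_pmod i n_gt0; have := leq_pmulr e n_gt0; nia.
move: blocks; rewrite -(ler_nat R) !natrD => blocks.
rewrite !chan_posE fp_def.
have -> : (i + ((Q * n + k).+1 + e))%:R = i%:R + Q%:R * n%:R + k%:R + 1 + e%:R :> R.
  by rewrite -addn1 !natrD natrM; ring.
set t := (_ %/ n)%:R in blocks *.
have : t * (fc - fs) <= ((i %/ n)%:R + (Q%:R + 1 + e%:R)) * (fc - fs).
  by apply: ler_wpM2r; rewrite ?subr_ge0.
have : 0 <= e%:R * fs by apply: mulr_ge0.
nra.
Qed.

Lemma card_chan_hits (N : nat) (S : {set 'I_N}) (o a b : R) (Q c : nat) :
  b - a < Q.+1%:R * fp -> b - a <= Q%:R * fp + c%:R * fc ->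
  (forall i, i \in S -> chan_pos i + o < b /\ a < chan_pos i + o + fs) ->
  (#|S| <= (n * Q + c).+1)%N.
Proof.
move=> lt_Qfp le_Qfp_cfc hitS; apply: card_le_diameter => i j Si Sj le_ij.
have [[ltib ltai] [ltjb ltaj]] := (hitS _ Si, hitS _ Sj).
have gap_lt : chan_pos (i + (j - i)) - chan_pos i < b - a + fs.
  by rewrite subnKC //; lra.
rewrite leqNgt; apply/negP => far.
suff : b - a + fs <= chan_pos (i + (j - i)) - chan_pos i by lra.
have [c_lt_n | n_le_c] := ltnP c n.
  apply: le_trans (chan_pos_gap i (j - i) Q c c_lt_n _); first lra.
  by rewrite mulnC.
apply: le_trans (chan_pos_gap i (j - i) Q.+1 0 n_gt0 _); first by rewrite mul0r addr0; lra.
by apply: leq_ltn_trans far; nia.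
Qed.

Lemma card_chan_hits_rmod (N : nat) (S : {set 'I_N}) (o a b : R) :
  0 < fc -> 0 < fp -> a <= b ->
  (forall i, i \in S -> chan_pos i + o < b /\ a < chan_pos i + o + fs) ->
  (#|S|%:R : R) <=
    (n%:Z * Num.floor ((b - a) / fp) + Num.ceil (rmod (b - a) fp / fc) + 1)%:~R.
Proof.
move=> fc_gt0 fp_gt0 le_ab hitS.
have /andP[floor_le lt_floor] := floor_itv ((b - a) / fp).
have [Q floorQ] : exists Q : nat, Num.floor ((b - a) / fp) = Q%:Z.
  by exists `|Num.floor ((b - a) / fp)|%N; rewrite gez0_abs // floor_ge0; apply: divr_ge0; lra.
rewrite floorQ -!pmulrn ler_pdivlMr // ltr_pdivrMr // in floor_le lt_floor.
rewrite /rmod floorQ.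
have := ceil_ge ((b - a - fp * Q%:R) / fc); rewrite ler_pdivrMr //.
have [c ->] : exists c : nat, Num.ceil ((b - a - fp * Q%:R) / fc) = c%:Z.
  exists `|Num.ceil ((b - a - fp * Q%:R) / fc)|%N; rewrite gez0_abs // ceil_ge0.
  by apply: lt_le_trans (_ : -1 < 0) _; rewrite ?ltrN10 //; apply: divr_ge0; lra.
rewrite -pmulrn => le_ceil.
have -> : n%:Z * Q%:Z + c%:Z + 1 = (n * Q + c).+1 by rewrite -addn1 !PoszD PoszM.
rewrite -pmulrn ler_nat.
apply: card_chan_hits hitS; rewrite -?natr1; lra.
Qed.
End ChannelPositions.

Local Open Scope classical_set_scope.

Lemma Tsupp_meets_of_measure_gt0 (R : realType) (s t : R) (Nsig : nat) (fmin fmax : nat -> R) :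
  (0 < (@lebesgue_measure R) (`[s, t] `&` Tsupp Nsig fmin fmax))%E ->
  exists2 j, (j < Nsig)%N & s < fmax j /\ fmin j < t.
Proof.
move=> pos; apply: contrapT => disjoint; move: pos.
suff -> : (@lebesgue_measure R) (`[s, t] `&` Tsupp Nsig fmin fmax) = 0%E by rewrite ltxx.
apply: (@subset_measure0 _ _ _ (@lebesgue_measure R) _ [set t]).
- apply: measurableI; first exact: measurable_itv.
  by apply: bigcup_measurable => j _; exact: measurable_itv.
- exact: measurable_set1.
- move=> x [/=]; rewrite in_itv /= => /andP[sx xt] [j /= ltj].
  rewrite in_itv /= => /andP[lox xhi].
  have [s_lt | ] := ltP s (fmax j); last by lra.
  have [lo_lt | ] := ltP (fmin j) t; last by lra.
  by exfalso; apply: disjoint; exists j.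
- exact: lebesgue_measure_set1.
Qed.
Local Close Scope classical_set_scope.

Lemma card_bigcup_leq_sum (T : finType) (N : nat) (A : nat -> {set T}) :
  (#|\bigcup_(j < N) A j| <= \sum_(j < N) #|A j|)%N.
Proof.
elim: N => [|N IH]; first by rewrite !big_ord0 cards0.
rewrite !big_ord_recr /=; apply: leq_trans (leq_card_setU _ _) _.
by rewrite leq_add2r.
Qed.

Theorem theorem1 (R : realType) (L n : nat) (fs fc fp : R) (Nsig : nat)
  (fmin fmax : nat -> R) :
  (1 <= L)%N -> (2 <= n)%N ->
  0 < fs -> fs < fc -> fc < fp ->
  fc = (fp - fs) / (n%:R - 1) ->
  (1 <= Nsig)%N ->
  (forall j, (j < Nsig)%N -> fmin j < fmax j) ->
  (forall j, (j.+1 < Nsig)%N -> fmax j < fmin j.+1) ->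
  (forall j, (j < Nsig)%N ->
     (- (L %/ 2)%:Z)%:~R * fp <= fmin j /\ fmin j <= ((L.-1 %/ 2)%:Z + 1)%:~R * fp /\
     (- (L %/ 2)%:Z)%:~R * fp <= fmax j /\ fmax j <= ((L.-1 %/ 2)%:Z + 1)%:~R * fp) ->
  2 * (\sum_(j < Nsig)
        ((n%:Z * Num.floor ((fmax j - fmin j) / fp)
          + Num.ceil (rmod (fmax j - fmin j) fp / fc) + 1)%:~R * fs))
    + 2 * Nsig%:R * fc
    <= \sum_(j < Nsig) (fmax j - fmin j) ->
  2 * (#|Sigma n L fp fc fs Nsig fmin fmax|)%:R * fs + 2 * Nsig%:R * fc
    <= \sum_(j < Nsig) (fmax j - fmin j).
Proof.
move=> _ n_ge2 fs_gt0 fs_lt_fc fc_lt_fp fc_def _ fmin_lt_fmax _ _ budget.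
have n_gt0 : (0 < n)%N by apply: leq_trans n_ge2.
have fp_def : fp = (n%:R - 1) * fc + fs.
  have n1_neq0 : n%:R - 1 != 0 :> R by rewrite subr_eq0 pnatr_eq1 gtn_eqF.
  by rewrite fc_def mulrCA divff // mulr1 subrK.
pose hits j := [set i : 'I_(n * L) |
  (Ffreq n L fp fc i.+1 < fmax j) && (fmin j < Ffreq n L fp fc i.+1 + fs)].
have Sigma_sub : Sigma n L fp fc fs Nsig fmin fmax \subset \bigcup_(j < Nsig) hits j.
  apply/fintype.subsetP => i; rewrite inE => /asboolP.
  case/Tsupp_meets_of_measure_gt0 => j ltj [lt_fmax gt_fmin].
  by apply/bigcupP; exists (Ordinal ltj) => //; rewrite inE lt_fmax gt_fmin.
have card_Sigma : (#|Sigma n L fp fc fs Nsig fmin fmax|%:R : R) <=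
    \sum_(j < Nsig) (n%:Z * Num.floor ((fmax j - fmin j) / fp)
          + Num.ceil (rmod (fmax j - fmin j) fp / fc) + 1)%:~R.
  apply: le_trans (_ : (\sum_(j < Nsig) #|hits j|)%:R <= _).
    by rewrite ler_nat (leq_trans (subset_leq_card Sigma_sub)) ?card_bigcup_leq_sum.
  rewrite natr_sum; apply: ler_sum => j _.
  apply: (@card_chan_hits_rmod R n fp fc fs n_gt0 (ltW fs_gt0) (ltW fs_lt_fc) fp_def
    _ _ (- ((L %/ 2)%:R * fp))); [lra | lra | exact/ltW/fmin_lt_fmax | ].
  by move=> i; rewrite inE !Ffreq_chan_pos // => /andP.
rewrite -mulr_suml in budget.
have := ler_wpM2r (ltW fs_gt0) card_Sigma.
lra.
Qed.
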